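(* Assume $a/b>\sqrt2$, $|u|<u_{\max}$ and $a^2+(u^2-2)c^2\ne0$. Let $\mathcal{C}^\dagger$ be the unit circle centered at $f_1=(-c,0)$. Then the radical axis of $\mathcal{C}^\dagger$ and $\mathcal{C}$ is perpendicular to the radical axis of $\mathcal{C}^\dagger$ and $\mathcal{C}'$.
   Context: The elliptic billiard is $\mathcal{E}: x^2/a^2+y^2/b^2=1$, $a>b>0$, $c=\sqrt{a^2-b^2}$, with $a/b>\sqrt2$, and $u_{\max}:=\frac{a}{c^2}\sqrt{a^2-2b^2}$. For parameter $u$ of the self-intersected 4-periodic family, $\mathcal{C}$ is the circle with center $C=\left(0,\frac{c^2u^2-a^2+2b^2}{2b\sqrt{1-u^2}}\right)$ and radius $R=\frac{a^2-c^2u^2}{2b\sqrt{1-u^2}}$ (through the 4-periodic's vertices and the foci), and $\mathcal{C}'$ is the circle with center $C'=\left(0,-\frac{2bc^2\sqrt{1-u^2}}{a^2+(u^2-2)c^2}\right)$ and radius $\left|\frac{c(c^2u^2-a^2)}{a^2+(u^2-2)c^2}\right|$ (through the outer polygon's vertices and the foci). *)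

From Stdlib Require Import Reals.
Open Scope R_scope.

Definition pt := (R * R)%type.

Definition focal (a b : R) : R := sqrt (a^2 - b^2).

Definition umax (a b : R) : R :=
  let c := focal a b in a / c^2 * sqrt (a^2 - 2 * b^2).

(* Circle C : through the 4-periodic's vertices and the foci *)
Definition centerC (a b u : R) : pt :=
  let c := focal a b in
  (0, (c^2 * u^2 - a^2 + 2 * b^2) / (2 * b * sqrt (1 - u^2))).
Definition radiusC (a b u : R) : R :=
  let c := focal a b in (a^2 - c^2 * u^2) / (2 * b * sqrt (1 - u^2)).

(* Circle C' : through the outer polygon's vertices and the foci *)
Definition centerC' (a b u : R) : pt :=
  let c := focal a b in
  (0, - (2 * b * c^2 * sqrt (1 - u^2)) / (a^2 + (u^2 - 2) * c^2)).
Definition radiusC' (a b u : R) : R :=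
  let c := focal a b in Rabs (c * (c^2 * u^2 - a^2) / (a^2 + (u^2 - 2) * c^2)).

Definition power (P : pt) (r : R) (X : pt) : R :=
  (fst X - fst P)^2 + (snd X - snd P)^2 - r^2.

Definition radical_axis (P1 : pt) (r1 : R) (P2 : pt) (r2 : R) : pt -> Prop :=
  fun X => power P1 r1 X = power P2 r2 X.

Definition line (p d : pt) : pt -> Prop :=
  fun X => exists t : R, X = (fst p + t * fst d, snd p + t * snd d).

Definition perpendicular (L1 L2 : pt -> Prop) : Prop :=
  exists p1 d1 p2 d2 : pt,
    d1 <> (0, 0) /\ d2 <> (0, 0) /\
    (forall X, L1 X <-> line p1 d1 X) /\
    (forall X, L2 X <-> line p2 d2 X) /\
    fst d1 * fst d2 + snd d1 * snd d2 = 0.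

From Stdlib Require Import Reals Lra Psatz.
Open Scope R_scope.

(* The radical axis of two circles with distinct centers P1, P2
   is the line through a suitable point with direction (P2 - P1) rotated by a
   right angle.  Hence two radical axes sharing the circle of center P0 are
   perpendicular exactly when (P1 - P0) . (P2 - P0) = 0.  For the circles of
   the theorem, f1 = (-c, 0) and the centers C, C' lie on the y-axis, so the
   condition reads c^2 + y_C y_C' = 0.  Since a^2 + (u^2 - 2) c^2 equals the
   numerator c^2 u^2 - a^2 + 2 b^2 of y_C, the product y_C y_C' simplifies
   to -c^2.  The file first proves the planar facts about radical axes, then
   the elementary inequalities on a, b, c, u guaranteeing that the formulas
   of the context are well defined (c > 0 and u^2 < 1), then the identity
   y_C y_C' = -c^2, and finally assembles the theorem. *)

Definition dot (v w : pt) : R := fst v * fst w + snd v * snd w.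
Definition vsub (P Q : pt) : pt := (fst P - fst Q, snd P - snd Q).

Definition rot (d : pt) : pt := (- snd d, fst d).

Lemma dot_self_pos (d : pt) : d <> (0, 0) -> 0 < dot d d.
Proof.
  destruct d as [x y]; unfold dot; simpl; intros Hd.
  destruct (Req_dec x 0) as [-> | Hx].
  - destruct (Req_dec y 0) as [-> | Hy]; [contradiction | nra].
  - nra.
Qed.

Lemma power_difference (P1 P2 : pt) (r1 r2 : R) (X : pt) :
  power P1 r1 X - power P2 r2 X
  = 2 * dot X (vsub P2 P1)
    + (dot P1 P1 - r1^2 - dot P2 P2 + r2^2).
Proof.
  destruct P1, P2, X; unfold power, dot, vsub; simpl; ring.
Qed.

Lemma radical_axis_is_line (P1 P2 : pt) (r1 r2 : R) :
  P1 <> P2 ->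
  let d := vsub P2 P1 in
  let k := - (dot P1 P1 - r1^2 - dot P2 P2 + r2^2) / (2 * dot d d) in
  forall X, radical_axis P1 r1 P2 r2 X <-> line (k * fst d, k * snd d) (rot d) X.
Proof.
  intros Hne d k X.
  assert (Hd : d <> (0, 0)).
  { destruct P1 as [p1 q1], P2 as [p2 q2]; unfold d, vsub; simpl.
    intros E; injection E; intros; apply Hne; f_equal; lra. }
  pose proof (dot_self_pos d Hd) as Hn.
  assert (Hiff : radical_axis P1 r1 P2 r2 X <->
                 2 * dot X d + (dot P1 P1 - r1^2 - dot P2 P2 + r2^2) = 0).
  { unfold radical_axis, d; rewrite <- power_difference; lra. }
  rewrite Hiff; unfold k; clearbody d.
  set (K := dot P1 P1 - r1^2 - dot P2 P2 + r2^2) in *.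
  destruct d as [d1 d2], X as [x y].
  unfold line, rot, dot in *; simpl in *.
  split.
  - intros H. exists ((d1 * y - d2 * x) / (d1 * d1 + d2 * d2)). f_equal.
    + apply (Rmult_eq_reg_l (2 * (d1 * d1 + d2 * d2))); [|lra].
      field_simplify; [nra | lra].
    + apply (Rmult_eq_reg_l (2 * (d1 * d1 + d2 * d2))); [|lra].
      field_simplify; [nra | lra].
  - intros [t Ht]. injection Ht; intros -> ->. field. lra.
Qed.

Lemma radical_axes_perpendicular (P0 P1 P2 : pt) (r0 r1 r2 : R) :
  P0 <> P1 -> P0 <> P2 -> dot (vsub P1 P0) (vsub P2 P0) = 0 ->
  perpendicular (radical_axis P0 r0 P1 r1) (radical_axis P0 r0 P2 r2).
Proof.
  intros H1 H2 Horth.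
  assert (Hrot : forall d : pt, d <> (0, 0) -> rot d <> (0, 0)).
  { intros [x y] Hd E; unfold rot in E; simpl in E; injection E; intros.
    apply Hd; f_equal; lra. }
  assert (Hsub : forall P Q : pt, P <> Q -> vsub Q P <> (0, 0)).
  { intros [p q] [p' q'] Hne E; unfold vsub in E; simpl in E; injection E; intros.
    apply Hne; f_equal; lra. }
  do 4 eexists; split; [|split; [|split; [|split]]].
  - apply Hrot, Hsub, H1.
  - apply Hrot, Hsub, H2.
  - apply (radical_axis_is_line P0 P1 r0 r1 H1).
  - apply (radical_axis_is_line P0 P2 r0 r2 H2).
  - revert Horth; unfold dot, rot; simpl; lra.
Qed.

Lemma aspect_ratio_sq (a b : R) : 0 < b -> a / b > sqrt 2 -> 2 * b^2 < a^2.
Proof.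
  intros Hb Hr.
  assert (Hs : sqrt 2 * b < a).
  { apply Rgt_lt, (Rmult_lt_compat_r b) in Hr; [|lra].
    unfold Rdiv in Hr; rewrite Rmult_assoc, Rinv_l in Hr by lra; lra. }
  pose proof (sqrt_sqrt 2 (Rlt_le 0 2 Rlt_0_2)) as H2.
  pose proof (sqrt_pos 2).
  assert (0 <= sqrt 2 * b) by nra.
  nra.
Qed.

Lemma focal_sq (a b : R) : 0 < b -> b < a -> (focal a b)^2 = a^2 - b^2.
Proof.
  intros Hb Hab; unfold focal; rewrite <- Rsqr_pow2; apply Rsqr_sqrt; nra.
Qed.

Lemma focal_pos (a b : R) : 0 < b -> b < a -> 0 < focal a b.
Proof. intros Hb Hab; unfold focal; apply sqrt_lt_R0; nra. Qed.

(* When a^2 > 2 b^2 the admissible parameter range lies inside (-1, 1):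
   indeed a^2 (a^2 - 2 b^2) = c^4 - b^4 < c^4. *)
Lemma umax_lt_one (a b : R) :
  0 < b -> b < a -> 2 * b^2 < a^2 -> umax a b < 1.
Proof.
  intros Hb Hba Hab.
  unfold umax; pose proof (focal_sq a b Hb Hba) as Hc2.
  set (c := focal a b) in *; set (s := sqrt (a^2 - 2 * b^2)).
  assert (Hs : s * s = a^2 - 2 * b^2) by (apply sqrt_sqrt; lra).
  assert (0 <= s) by apply sqrt_pos.
  assert (Hsq : (a * s) * (a * s) < c^2 * c^2).
  { replace ((a * s) * (a * s)) with (a * a * (s * s)) by ring.
    rewrite Hs, Hc2.
    assert (0 < b^2 * b^2) by (apply Rmult_lt_0_compat; nra).
    nra. }
  assert (a * s < c^2) by nra.
  apply (Rmult_lt_reg_r (c^2)); [nra|].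
  field_simplify; nra.
Qed.

(* The key identity: the ordinates of the centers of C and C' multiply to
   -c^2, because a^2 + (u^2 - 2) c^2 = c^2 u^2 - a^2 + 2 b^2. *)
Lemma center_ordinates_product (a b u : R) :
  0 < b -> b < a -> u^2 < 1 ->
  a^2 + (u^2 - 2) * (focal a b)^2 <> 0 ->
  snd (centerC a b u) * snd (centerC' a b u) = - (focal a b)^2.
Proof.
  intros Hb Hab Hu HD.
  pose proof (focal_sq a b Hb Hab) as Hc2.
  assert (Hsq : 0 < sqrt (1 - u^2)) by (apply sqrt_lt_R0; lra).
  unfold centerC, centerC'; cbn [snd].
  set (c := focal a b) in *; set (sq := sqrt (1 - u^2)) in *.
  replace (c^2 * u^2 - a^2 + 2 * b^2) with (a^2 + (u^2 - 2) * c^2) by nra.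
  field; repeat split; lra.
Qed.

Theorem mainTheorem7 (a b u : R) :
  0 < b -> b < a -> a / b > sqrt 2 ->
  Rabs u < umax a b ->
  a^2 + (u^2 - 2) * (focal a b)^2 <> 0 ->
  let f1 : pt := (- focal a b, 0) in
  perpendicular
    (radical_axis f1 1 (centerC a b u) (radiusC a b u))
    (radical_axis f1 1 (centerC' a b u) (radiusC' a b u)).
Proof.
  intros Hb Hab Hr Hu HD f1.
  pose proof (umax_lt_one a b Hb Hab (aspect_ratio_sq a b Hb Hr)) as Hum.
  assert (Hu1 : u^2 < 1).
  { pose proof (Rabs_pos u). rewrite <- (pow2_abs u). nra. }
  pose proof (focal_pos a b Hb Hab) as Hc.
  pose proof (center_ordinates_product a b u Hb Hab Hu1 HD) as Hprod.
  (* f1 lies off the y-axis, which carries both centers. *)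
  assert (Hoff : forall y, f1 <> (0, y)).
  { intros y E; injection E; intros; lra. }
  apply radical_axes_perpendicular; [apply Hoff | apply Hoff |].
  revert Hprod; unfold dot, vsub, f1, centerC, centerC'; cbn [fst snd]; nra.
Qed.
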